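(* For any VSCC $F$, the following are equivalent: (1) $F$ satisfies Pure IIA; (2) $F$ is defeat-rationalized by some VCCR satisfying IIA.
   Context: Profiles: $\mathbf P:V\to\mathcal L(X)$, $V$ nonempty finite set of voters, $X=X(\mathbf P)$ nonempty finite set of candidates (from fixed infinite sets), $\mathcal L(X)$ strict linear orders; $\mathbf P_{|Y}$ is the profile with each ballot restricted to $Y$. A VCCR is a function $f$ assigning to each profile an asymmetric relation $f(\mathbf P)$ on $X(\mathbf P)$ ($x$ defeats $y$ iff $(x,y)\in f(\mathbf P)$). A VSCC is a function $F$ with $\varnothing\ne F(\mathbf P)\subseteq X(\mathbf P)$ for every profile. $F$ is defeat-rationalized by $f$ if for every profile $\mathbf P$, $F(\mathbf P)=\{x\in X(\mathbf P): \text{no } y\in X(\mathbf P) \text{ with } (y,x)\in f(\mathbf P)\}$. A VCCR $f$ satisfies IIA if whenever $(x,y)\in f(\mathbf P)$ and $\mathbf P_{|\{x,y\}}=\mathbf P'_{|\{x,y\}}$, then $(x,y)\in f(\mathbf P')$. A VSCC $F$ satisfies Pure IIA if for every profile $\mathbf P$ and $y\in X(\mathbf P)$ with $y\notin F(\mathbf P)$ there is $x\in X(\mathbf P)$ such that $y\notin F(\mathbf P')$ for every profile $\mathbf P'$ with $\mathbf P_{|\{x,y\}}=\mathbf P'_{|\{x,y\}}$. *)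

From mathcomp Require Import all_boot finmap.
Set Implicit Arguments. Unset Strict Implicit. Unset Printing Implicit Defensive.
Local Open Scope fset_scope.

(* A profile: a nonempty finite set V of voters, a nonempty finite set X of
   candidates, and for every voter v in V a strict linear order on X;
   [ballot P v a b] means voter v ranks a strictly above b. *)
Definition strict_linear_on (X : {fset nat}) (r : nat -> nat -> bool) : Prop :=
  (forall a, a \in X -> ~~ r a a) /\
  (forall a b c, a \in X -> b \in X -> c \in X -> r a b -> r b c -> r a c) /\
  (forall a b, a \in X -> b \in X -> a <> b -> r a b \/ r b a).

Record profile := Profile {
  voters : {fset nat};
  cands : {fset nat};
  ballot : nat -> nat -> nat -> bool;
  voters_ne : voters != fset0;
  cands_ne : cands != fset0;
  ballot_lin : forall v, v \in voters -> strict_linear_on cands (ballot v)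
}.

(* P|_{x,y} = P'|_{x,y}: both restrictions are defined (x,y candidates of
   both), same voter set, and every voter's ballot restricted to {x,y}
   coincides. *)
Definition same_restr2 (P P' : profile) (x y : nat) : Prop :=
  voters P = voters P' /\
  x \in cands P /\ y \in cands P /\ x \in cands P' /\ y \in cands P' /\
  (forall v, v \in voters P -> forall a b, a \in [:: x; y] -> b \in [:: x; y] ->
     ballot P v a b = ballot P' v a b).

Definition isVCCR (f : profile -> nat -> nat -> Prop) : Prop :=
  forall P, (forall x y, f P x y -> x \in cands P /\ y \in cands P) /\
            (forall x y, f P x y -> ~ f P y x).

Definition isVSCC (F : profile -> nat -> Prop) : Prop :=
  forall P, (exists x, F P x) /\ (forall x, F P x -> x \in cands P).

Definition defeat_rationalized (F : profile -> nat -> Prop)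
    (f : profile -> nat -> nat -> Prop) : Prop :=
  forall P x, F P x <-> (x \in cands P /\ ~ exists y, y \in cands P /\ f P y x).

Definition IIA (f : profile -> nat -> nat -> Prop) : Prop :=
  forall P P' x y, f P x y -> same_restr2 P P' x y -> f P' x y.

Definition pure_IIA (F : profile -> nat -> Prop) : Prop :=
  forall P y, y \in cands P -> ~ F P y ->
    exists x, x \in cands P /\ forall P', same_restr2 P P' x y -> ~ F P' y.

From mathcomp Require Import all_boot finmap.
From Stdlib Require Import Classical.
Set Implicit Arguments. Unset Strict Implicit.
Local Open Scope fset_scope.

(* For (2) => (1): whatever defeats y in P still defeats it in every profile
   agreeing with P on {x, y}, by IIA.  For (1) => (2): let x defeat y in P when
   y loses in every profile agreeing with P on {x, y}.  This relation has IIA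
   because agreement on {x, y} is transitive, and rationalizes F by Pure IIA.
   It is asymmetric because F must choose x or y on the two-candidate profile
   P|{x, y}, which agrees with P on {x, y}. *)

Lemma same_restr2_refl P x y :
  x \in cands P -> y \in cands P -> same_restr2 P P x y.
Proof. by move=> hx hy; do !split. Qed.

Lemma same_restr2_trans P P' P'' x y :
  same_restr2 P P' x y -> same_restr2 P' P'' x y -> same_restr2 P P'' x y.
Proof.
move=> [eV1 [? [? [? [? eb1]]]]] [eV2 [? [? [? [? eb2]]]]].
do !split => //; first by rewrite eV1.
by move=> v hv a b ha hb; rewrite eb1 // eb2 // -eV1.
Qed.

Lemma same_restr2C P P' x y : same_restr2 P P' x y -> same_restr2 P P' y x.
Proof.
move=> [eV [? [? [? [? eb]]]]]; do !split => //.
by move=> v hv a b ha hb; apply: eb; rewrite // mem_seq2 orbC -mem_seq2.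
Qed.

Section Restriction.

Variables (P : profile) (x y : nat).
Hypotheses (hx : x \in cands P) (hy : y \in cands P).

Lemma fset2_neq0 : [fset x; y] != fset0.
Proof. by apply/fset0Pn; exists x; rewrite !inE eqxx. Qed.

Lemma ballot_restr2_lin v :
  v \in voters P -> strict_linear_on [fset x; y] (ballot P v).
Proof.
have sub a : a \in [fset x; y] -> a \in cands P.
  by rewrite !inE => /orP [] /eqP ->.
move=> /ballot_lin [irr [trans total]].
split; first by move=> a /sub; apply: irr.
split; first by move=> a b c /sub ? /sub ? /sub ?; apply: trans.
by move=> a b /sub ? /sub ?; apply: total.
Qed.

Definition restr2 : profile :=
  Profile (voters_ne P) fset2_neq0 ballot_restr2_lin.

Lemma same_restr2_restr2 : same_restr2 P restr2 x y.
Proof. by do !split => //=; rewrite !inE eqxx ?orbT. Qed.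

End Restriction.

Definition robust_defeat (F : profile -> nat -> Prop) P x y : Prop :=
  [/\ x \in cands P, y \in cands P &
      forall P', same_restr2 P P' x y -> ~ F P' y].

Section RobustDefeat.

Variable F : profile -> nat -> Prop.

Lemma robust_defeat_IIA : IIA (robust_defeat F).
Proof.
move=> P P' x y [hx hy lose] sP; have [_ [_ [_ [hx' [hy' _]]]]] := sP.
split=> // P'' sP'; exact/lose/(same_restr2_trans sP).
Qed.

Hypothesis HF : isVSCC F.

Lemma robust_defeat_VCCR : isVCCR (robust_defeat F).
Proof.
move=> P; split=> [x y [] //|x y [hx hy lose_y] [_ _ lose_x]].
have sPxy := same_restr2_restr2 hx hy.
have [[z Fz] inR] := HF (restr2 hx hy).
have /fset2P [ez|ez] := inR z Fz; rewrite {z}ez in Fz.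
- exact: lose_x (same_restr2C sPxy) Fz.
- exact: lose_y sPxy Fz.
Qed.

Lemma robust_defeat_rationalizes :
  pure_IIA F -> defeat_rationalized F (robust_defeat F).
Proof.
move=> pure P x; split=> [Fx|[hx undefeated]].
  have hx := (HF P).2 x Fx; split=> // -[y [hy [_ _ lose]]].
  exact: lose P (same_restr2_refl hy hx) Fx.
apply: NNPP => nFx; have [y [hy lose]] := pure P x hx nFx.
by apply: undefeated; exists y.
Qed.

End RobustDefeat.

Lemma IIA_rationalized_pure_IIA F f :
  IIA f -> defeat_rationalized F f -> pure_IIA F.
Proof.
move=> iia rat P y hy nFy.
have [x [hx fxy]] : exists x, x \in cands P /\ f P x y.
  by apply: NNPP => none; apply/nFy/rat.
exists x; split=> // P' sP FP'y.
have [_ [_ [_ [hx' _]]]] := sP.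
by have [_] := (rat P' y).1 FP'y; apply; exists x; split; last exact: iia sP.
Qed.

Theorem proposition5p4 (F : profile -> nat -> Prop) (HF : isVSCC F) :
  pure_IIA F <->
  exists f : profile -> nat -> nat -> Prop, isVCCR f /\ IIA f /\ defeat_rationalized F f.
Proof.
split=> [pure | [f [_ [iia rat]]]].
- exists (robust_defeat F); split; first exact: robust_defeat_VCCR.
  split; first exact: robust_defeat_IIA.
  exact: robust_defeat_rationalizes.
- exact: IIA_rationalized_pure_IIA iia rat.
Qed.
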